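(* Let $\mathcal X$ be finite with $|\mathcal X|\ge2$, $\mu\in\mathbb R^{\mathcal X}$, $\sigma\in(0,\infty)^{\mathcal X}$. On the probability simplex $\Delta(\mathcal X)$ define $$\mathcal W(p):=\sum_{x\in\mathcal X}p_x\Big(\mu_x+\sqrt{2\tilde I(p_x)}\,\sigma_x\Big)=\sum_{x\in\mathcal X}\big(p_x\mu_x+\phi(\Phi^{-1}(p_x))\,\sigma_x\big),$$ with the convention $\phi(\Phi^{-1}(0))=\phi(\Phi^{-1}(1))=0$. Then $\mathcal W$ is strictly concave on $\Delta(\mathcal X)$ and its unique maximizer over $\Delta(\mathcal X)$ is $q$ with $q_x=\Phi\big(\frac{\mu_x-\kappa^*}{\sigma_x}\big)$, where $\kappa^*\in\mathbb R$ is such that $\sum_x q_x=1$.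
   Context: $\Phi$ and $\phi$ denote the standard Gaussian CDF and PDF. The quasi-surprisal is $\tilde I(u):=\frac12\big(\phi(\Phi^{-1}(u))/u\big)^2$ for $u\in(0,1)$, so that $u\sqrt{2\tilde I(u)}=\phi(\Phi^{-1}(u))$. *)

From HB Require Import structures.
From mathcomp Require Import all_boot all_order all_algebra.
From mathcomp Require Import all_classical all_reals all_analysis.
Set Implicit Arguments. Unset Strict Implicit. Unset Printing Implicit Defensive.
Import Order.TTheory GRing.Theory Num.Theory.
Local Open Scope classical_set_scope.
Local Open Scope ring_scope.

Section Gauss.
Context {R : realType}.

Definition gphi (x : R) : R := normal_pdf 0 1 x.

Definition gPhi (x : R) : R :=
  Rintegral (@lebesgue_measure R) `]-oo, x] gphi.

(* Phi^{-1}(u): some x with Phi x = u (unique and existent for 0 < u < 1) *)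
Definition gPhiinv (u : R) : R := xget 0 [set x | gPhi x = u].

Definition phiPhiinv (u : R) : R :=
  if (0 < u) && (u < 1) then gphi (gPhiinv u) else 0.

Definition in_simplex (T : finType) (p : T -> R) : Prop :=
  (forall x, 0 <= p x) /\ \sum_(x : T) p x = 1.

Definition Wfun (T : finType) (mu sigma : T -> R) (p : T -> R) : R :=
  \sum_(x : T) (p x * mu x + phiPhiinv (p x) * sigma x).

End Gauss.

From HB Require Import structures.
From mathcomp Require Import all_boot all_order all_algebra.
From mathcomp Require Import all_classical all_reals all_analysis.
From mathcomp Require Import ring lra.
Set Implicit Arguments. Unset Strict Implicit. Unset Printing Implicit Defensive.
Import Order.TTheory GRing.Theory Num.Theory.
Import numFieldNormedType.Exports.
Local Open Scope ring_scope.

(* Write g u := phi (Phi^-1 u) on [0, 1].  The whole proof rests on the tangent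
   inequality
     g u <= phi y - y * (u - Phi y),  with equality only at u = Phi y,
   for every real y.  At u = Phi x it says that x |-> phi x + y * Phi x, whose
   derivative is (y - x) * phi x, peaks at x = y; at the endpoints u = 0 and
   u = 1, where g vanishes by convention, it follows from the Gaussian tails of
   Phi because phi > 0.
   Comparing a convex combination of two distinct points with the tangent at
   their (interior) mixture gives strict concavity of g, hence of W.  With
   y_x := (mu x - kappa) / sigma x, the tangent inequalities at q x = Phi y_x,
   weighted by sigma x, add up to W p <= W q + kappa * (sum p - sum q) = W q.
   Finally kappa exists by the intermediate value theorem, since
   kappa |-> sum_x Phi ((mu x - kappa) / sigma x) is continuous, exceeds 1 for
   kappa small enough and is below 1 for kappa large enough. *)

Section real_facts.
Context {R : realType}.

Lemma is_derive_continuous (f df : R -> R) :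
  (forall x : R, is_derive x 1 f (df x)) -> continuous f.
Proof.
by move=> fd x; apply/differentiable_continuous/derivable1_diffP; case: (fd x).
Qed.

Lemma is_derive_gt0_lt (f df : R -> R) (a b : R) :
  (forall x : R, is_derive x 1 f (df x)) -> (forall c, a < c < b -> 0 < df c) ->
  a < b -> f a < f b.
Proof.
move=> fd df_gt0 ab.
have [c /[!in_itv]/= /df_gt0 dfc_gt0 fE] := MVT ab (fun x _ => fd x)
  (continuous_subspaceT (is_derive_continuous fd)).
by rewrite -subr_gt0 fE mulr_gt0 // subr_gt0.
Qed.

Lemma gt0_increasing_tail (h : R -> R) (y : R) :
  (forall a b, a < b -> b <= y -> h a < h b) ->
  (forall e z : R, 0 < e -> exists2 x, x <= z & - e < h x) -> 0 < h y.
Proof.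
move=> h_incr h_tail.
have y1y : y - 1 < y by rewrite ltrBlDr ltrDl.
have d_gt0 : 0 < h y - h (y - 1) by rewrite subr_gt0 h_incr.
have [x x_le hx] := h_tail _ (y - 1) d_gt0.
have : h x <= h (y - 1).
  move: x_le; rewrite le_eqVlt => /predU1P[-> //|xy].
  exact/ltW/h_incr/ltW.
lra.
Qed.

Lemma ltrN_mul_small (y t e : R) :
  0 < e -> 0 <= t -> t < e / (`|y| + 1) -> - e < y * t.
Proof.
move=> e_gt0 t_ge0; rewrite ltr_pdivlMr ?ltr_wpDl // => te.
have : - `|y| <= y by rewrite lerNnormlW.
nra.
Qed.

Lemma finite_ub (T : finType) (f : T -> R) : exists k, forall x, f x <= k.
Proof.
exists (\sum_x `|f x|) => x.
by rewrite (bigD1 x) //= (le_trans (ler_norm _)) // lerDl sumr_ge0.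
Qed.

End real_facts.

Section gauss.
Local Open Scope classical_set_scope.
Local Open Scope ring_scope.
Context {R : realType}.
Local Notation gphi := (@gphi R).
Local Notation gPhi := (@gPhi R).

Lemma gphiE (x : R) : gphi x = normal_peak 1 * expR (- (x ^+ 2) / 2).
Proof. by rewrite /gphi normal_pdfE ?oner_neq0 // /normal_fun subr0 expr1n. Qed.

Lemma gphi_gt0 (x : R) : 0 < gphi x.
Proof. by rewrite gphiE mulr_gt0 ?expR_gt0 ?normal_peak_gt0 ?oner_neq0. Qed.

Lemma is_derive_gphi (x : R) : is_derive x 1 gphi (- x * gphi x).
Proof.
have -> : gphi = (fun y => normal_peak 1 * (expR \o (fun z : R => - (z ^+ 2) / 2)) y).
  by apply/funext => y; rewrite gphiE.
have dsq : is_derive x 1 (fun z : R => - (z ^+ 2) / 2) (- x).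
  by apply: trigger_derive; rewrite /GRing.scale /= !mulr0 add0r !mulr1; field.
have dexp := is_derive1_comp (is_derive_expR _) dsq.
by apply: trigger_derive; rewrite /GRing.scale /=; ring.
Qed.

Lemma is_derive_gPhi (x : R) : is_derive x 1 gPhi (gphi x).
Proof.
have gphi_int : (@lebesgue_measure R).-integrable `]-oo, x + 1] (EFin \o gphi).
  exact: integrableS (integrable_normal_pdf 0 1).
have x_lt : x < x + 1 by rewrite ltrDl.
have [d dE] := continuous_FTC1 x_lt gphi_int (ltNyr _)
  (@continuous_normal_pdf R 0 1 (oner_neq0 R) x).
by apply: DeriveDef; [exact: d | rewrite -derive1E].
Qed.

Lemma continuous_gPhi : continuous gPhi.
Proof. exact: is_derive_continuous is_derive_gPhi. Qed.

Lemma gPhi_lt : {homo gPhi : x y / x < y}.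
Proof. by move=> x y; apply: is_derive_gt0_lt is_derive_gPhi (fun c _ => gphi_gt0 c). Qed.

Lemma ler_gPhi : {mono gPhi : x y / x <= y}.
Proof. exact: le_mono gPhi_lt. Qed.

Lemma gPhi_inj : injective gPhi.
Proof. exact: inc_inj ler_gPhi. Qed.

Local Notation P := (@normal_prob R 0 1).

Lemma gPhiE (x : R) : gPhi x = fine (P `]-oo, x]).
Proof. by []. Qed.

Lemma gPhi_ge0 (x : R) : 0 <= gPhi x.
Proof. by rewrite gPhiE fine_ge0 // measure_ge0. Qed.

Lemma gPhi_le1 (x : R) : gPhi x <= 1.
Proof.
have := probability_le1 P (measurable_itv `]-oo, x]).
move=> le1; rewrite gPhiE -lee_fin fineK // ge0_fin_numE ?measure_ge0 //.
exact: le_lt_trans le1 (ltry _).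
Qed.

Lemma gPhi_gt0 (x : R) : 0 < gPhi x.
Proof. by rewrite (le_lt_trans (gPhi_ge0 (x - 1))) // gPhi_lt // ltrBlDr ltrDl. Qed.

Lemma gPhi_lt1 (x : R) : gPhi x < 1.
Proof. by rewrite (lt_le_trans _ (gPhi_le1 (x + 1))) // gPhi_lt // ltrDl. Qed.

Lemma gPhi_cvgNy : gPhi (- n%:R) @[n --> \oo] --> (0 : R).
Proof.
pose F n := [set` `]-oo, - (n%:R : R)]].
have F_cap : \bigcap_n F n = set0.
  rewrite -subset0 => x /(_ (Num.truncn (- x)).+1 I).
  by rewrite /F /= in_itv /= lerNr => /(lt_le_trans (truncnS_gt _)); rewrite ltxx.
have : P \o F @ \oo --> P (\bigcap_n F n).
  apply: nonincreasing_cvg_mu => //.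
  - by rewrite (le_lt_trans (probability_le1 _ _)) ?ltry //; exact: measurable_itv.
  - by move=> n; exact: measurable_itv.
  - by apply: bigcapT_measurable => n; exact: measurable_itv.
  - move=> m n mn; apply/subsetPset => x; rewrite /F /= !in_itv /= => /le_trans.
    by apply; rewrite lerN2 ler_nat.
by rewrite F_cap measure0 => /fine_cvgP[].
Qed.

Lemma gPhi_cvgy : gPhi n%:R @[n --> \oo] --> (1 : R).
Proof.
pose F n := [set` `]-oo, (n%:R : R)]].
have F_cup : \bigcup_n F n = setT.
  rewrite -subTset => x _; exists (Num.truncn x).+1 => //.
  by rewrite /F /= in_itv /= ltW // truncnS_gt.
have : P \o F @ \oo --> P (\bigcup_n F n).
  apply: nondecreasing_cvg_mu => //.
  - by move=> n; exact: measurable_itv.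
  - by apply: bigcupT_measurable => n; exact: measurable_itv.
  - move=> m n mn; apply/subsetPset => x; rewrite /F /= !in_itv /= => /le_trans.
    by apply; rewrite ler_nat.
by rewrite F_cup probability_setT => /fine_cvgP[].
Qed.

Lemma gPhi_left_tail (e z : R) : 0 < e -> exists2 x, x <= z & gPhi x < e.
Proof.
move=> e_gt0; have [N _ hN] := cvgr_lt _ gPhi_cvgNy e e_gt0.
exists (Num.min (- N%:R) z); first by rewrite ge_min lexx orbT.
by rewrite (le_lt_trans _ (hN N (leqnn N))) // ler_gPhi ge_min lexx.
Qed.

Lemma gPhi_right_tail (e z : R) : 0 < e -> exists2 x, z <= x & 1 - e < gPhi x.
Proof.
move=> e_gt0; have [N _ hN] : \forall n \near \oo, 1 - e < gPhi n%:R.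
  by apply: (cvgr_gt _ gPhi_cvgy); rewrite ltrBlDr ltrDl.
exists (Num.max N%:R z); first by rewrite le_max lexx orbT.
by rewrite (lt_le_trans (hN N (leqnn N))) // ler_gPhi le_max lexx.
Qed.

Lemma gPhi_surj (c : R) : 0 < c < 1 -> exists y, gPhi y = c.
Proof.
move=> /andP[c_gt0 c_lt1].
have [a _ ha] := gPhi_left_tail 0 c_gt0.
have c'_gt0 : 0 < 1 - c by rewrite subr_gt0.
have [b _] := gPhi_right_tail 0 c'_gt0; rewrite subKr => hb.
have ab : a <= b by rewrite -ler_gPhi ltW // (lt_trans ha).
have c_between : Num.min (gPhi a) (gPhi b) <= c <= Num.max (gPhi a) (gPhi b).
  by rewrite ge_min le_max (ltW ha) (ltW hb) orbT.
have [y _ <-] := IVT ab (continuous_subspaceT continuous_gPhi) c_between.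
by exists y.
Qed.

Lemma phiPhiinv_gPhi (y : R) : phiPhiinv (gPhi y) = gphi y.
Proof.
rewrite /phiPhiinv gPhi_gt0 gPhi_lt1 /=; congr gphi; apply: gPhi_inj.
exact: (xgetPex 0 (ex_intro (fun x => gPhi x = gPhi y) y erefl)).
Qed.

(* The value of u |-> g u + y * u at u = gPhi x, so that its maximum at x = y
   is the tangent inequality for g at gPhi y. *)
Definition gphiPhi (y x : R) := gphi x + y * gPhi x.

Lemma is_derive_gphiPhi (y x : R) : is_derive x 1 (gphiPhi y) ((y - x) * gphi x).
Proof.
have dgphi := is_derive_gphi x; have dgPhi := is_derive_gPhi x.
by apply: trigger_derive; rewrite /GRing.scale /=; ring.
Qed.

Lemma gphiPhi_lt_left (y a b : R) : a < b -> b <= y -> gphiPhi y a < gphiPhi y b.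
Proof.
move=> ab b_le; apply: (is_derive_gt0_lt (is_derive_gphiPhi y)) ab => c /andP[_ cb].
by rewrite mulr_gt0 ?gphi_gt0 // subr_gt0 (lt_le_trans cb).
Qed.

Lemma gphiPhi_lt_right (y a b : R) : y <= a -> a < b -> gphiPhi y b < gphiPhi y a.
Proof.
move=> a_ge ab; rewrite -ltrN2.
apply: (is_derive_gt0_lt (fun x => is_deriveN (is_derive_gphiPhi y x))) ab.
move=> c /andP[ac _].
by rewrite -mulNr mulr_gt0 ?gphi_gt0 // opprB subr_gt0 (le_lt_trans a_ge).
Qed.

Lemma gphiPhi_lt_max (y x : R) : x != y -> gphiPhi y x < gphiPhi y y.
Proof.
by case: (ltgtP x y) => // [xy|yx] _; [exact: gphiPhi_lt_left | exact: gphiPhi_lt_right].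
Qed.

Lemma gphiPhi_gt0 (y : R) : 0 < gphiPhi y y.
Proof.
apply: gt0_increasing_tail (@gphiPhi_lt_left y) _ => e z e_gt0.
have e'_gt0 : 0 < e / (`|y| + 1) by rewrite divr_gt0 // ltr_wpDl.
have [x x_le hx] := gPhi_left_tail z e'_gt0.
exists x => //; have := ltrN_mul_small e_gt0 (gPhi_ge0 x) hx.
by have := gphi_gt0 x; rewrite /gphiPhi; lra.
Qed.

Lemma gphiPhi_gt_id (y : R) : y < gphiPhi y y.
Proof.
rewrite -subr_gt0 -{2}[y]opprK.
apply: (gt0_increasing_tail (h := fun x => gphiPhi y (- x) - y)) => [a b ab b_le|e z e_gt0].
  by rewrite ltrD2r gphiPhi_lt_right ?ltrN2 // lerNr.
have e'_gt0 : 0 < e / (`|- y| + 1) by rewrite divr_gt0 // ltr_wpDl.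
have [w w_ge hw] := gPhi_right_tail (- z) e'_gt0.
exists (- w); first by rewrite lerNl.
rewrite opprK; have hw' : 1 - gPhi w < e / (`|- y| + 1) by lra.
have w_ge0 : 0 <= 1 - gPhi w by rewrite subr_ge0 gPhi_le1.
have := ltrN_mul_small e_gt0 w_ge0 hw'.
by have := gphi_gt0 w; rewrite /gphiPhi; lra.
Qed.

Lemma phiPhiinv_tangent (y u : R) : 0 <= u <= 1 ->
  phiPhiinv u <= gphi y - y * (u - gPhi y) ?= iff (u == gPhi y).
Proof.
move=> /andP[]; rewrite !le_eqVlt => /predU1P[<- _|u_gt0].
  apply/leifP; rewrite eq_sym (gt_eqF (gPhi_gt0 y)) /phiPhiinv ltxx /=.
  by have := gphiPhi_gt0 y; rewrite /gphiPhi; lra.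
move=> /predU1P[->|u_lt1].
  apply/leifP; rewrite (gt_eqF (gPhi_lt1 y)) /phiPhiinv ltxx andbF.
  by have := gphiPhi_gt_id y; rewrite /gphiPhi; lra.
have [x <-] : exists x, gPhi x = u by apply: gPhi_surj; rewrite u_gt0.
apply/leifP; rewrite phiPhiinv_gPhi (inj_eq gPhi_inj).
have [->|xy] := eqVneq x y; first by rewrite subrr mulr0 subr0.
by have := gphiPhi_lt_max xy; rewrite /gphiPhi; lra.
Qed.

Lemma phiPhiinv_concave (a b t : R) : 0 <= a <= 1 -> 0 <= b <= 1 -> 0 < t < 1 ->
  t * phiPhiinv a + (1 - t) * phiPhiinv b
    <= phiPhiinv (t * a + (1 - t) * b) ?= iff (a == b).
Proof.
move=> a01 b01 /andP[t_gt0 t_lt1]; apply/leifP.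
have [<-|ab] := eqVneq a b; first by rewrite -!mulrDl [t + _]addrC subrK !mul1r.
set c := t * a + (1 - t) * b.
have [y cE] : exists y, gPhi y = c.
  apply: gPhi_surj; move: a01 b01 => /andP[a_ge0 a_le1] /andP[b_ge0 b_le1].
  by apply/andP; rewrite /c; case: (ltgtP a b) ab => // a_b _; split; nra.
have ha : phiPhiinv a < gphi y - y * (a - gPhi y).
  rewrite (lt_leif (phiPhiinv_tangent y a01)) cE; apply: contraNneq ab => ac.
  have : (1 - t) * (a - b) = a - c by rewrite /c; ring.
  by rewrite -ac subrr => /eqP; rewrite mulf_eq0 !subr_eq0 (gt_eqF t_lt1).
have hb := (phiPhiinv_tangent y b01).1.
have E : t * (gphi y - y * (a - gPhi y)) + (1 - t) * (gphi y - y * (b - gPhi y))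
    = gphi y by rewrite cE /c; ring.
rewrite -cE phiPhiinv_gPhi; nra.
Qed.

Lemma Wterm_concave (m s a b t : R) :
  0 < s -> 0 <= a <= 1 -> 0 <= b <= 1 -> 0 < t < 1 ->
  t * (a * m + phiPhiinv a * s) + (1 - t) * (b * m + phiPhiinv b * s)
    <= (t * a + (1 - t) * b) * m + phiPhiinv (t * a + (1 - t) * b) * s
    ?= iff (a == b).
Proof.
move=> s_gt0 a01 b01 t01.
have -> : t * (a * m + phiPhiinv a * s) + (1 - t) * (b * m + phiPhiinv b * s)
    = (t * a + (1 - t) * b) * m + (t * phiPhiinv a + (1 - t) * phiPhiinv b) * s.
  by ring.
by rewrite (mono_leif (lerD2l _)) (mono_leif (ler_pM2r s_gt0)); exact: phiPhiinv_concave.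
Qed.

Lemma Wterm_tangent (m s k y u : R) : 0 < s -> s * y = m - k -> 0 <= u <= 1 ->
  u * m + phiPhiinv u * s
    <= gPhi y * m + phiPhiinv (gPhi y) * s + k * (u - gPhi y) ?= iff (u == gPhi y).
Proof.
move=> s_gt0 syE u01.
have -> : gPhi y * m + phiPhiinv (gPhi y) * s + k * (u - gPhi y)
    = u * m + (gphi y - y * (u - gPhi y)) * s.
  by rewrite phiPhiinv_gPhi mulrBl mulrAC [y * s]mulrC syE; ring.
by rewrite (mono_leif (lerD2l _)) (mono_leif (ler_pM2r s_gt0)); exact: phiPhiinv_tangent.
Qed.

End gauss.

Section simplex.
Context {R : realType} {T : finType}.
Implicit Types p q : T -> R.

Lemma simplex01 p x : in_simplex p -> 0 <= p x <= 1.
Proof.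
case=> p_ge0 p_sum1; rewrite p_ge0 -p_sum1 (bigD1 x) //= lerDl.
by rewrite sumr_ge0.
Qed.

Lemma fun_neq_forallN p q : p <> q -> ~~ [forall x, p x == q x].
Proof. by move=> pq; apply/forallP => pqE; apply/pq/funext => x; exact/eqP. Qed.

End simplex.

Section objective.
Context {R : realType} {T : finType} (mu sigma : T -> R).
Hypothesis sigma_gt0 : forall x, 0 < sigma x.
Local Notation W := (Wfun mu sigma).
Local Notation gauss_mass kappa := (\sum_x gPhi ((mu x - kappa) / sigma x)).

Lemma Wfun_concave (p p' : T -> R) (t : R) :
  in_simplex p -> in_simplex p' -> 0 < t < 1 ->
  t * W p + (1 - t) * W p' <= W (fun x => t * p x + (1 - t) * p' x)
    ?= iff [forall x, p x == p' x].
Proof.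
move=> hp hp' t01; rewrite /Wfun !mulr_sumr -big_split /=.
by apply: leif_sum => x _; apply: Wterm_concave; rewrite ?simplex01.
Qed.

Lemma Wfun_tangent (kappa : R) (p : T -> R) : gauss_mass kappa = 1 -> in_simplex p ->
  let q x := gPhi ((mu x - kappa) / sigma x) in
  W p <= W q ?= iff [forall x, p x == q x].
Proof.
move=> mass1 hp q.
have -> : W q = \sum_x (q x * mu x + phiPhiinv (q x) * sigma x + kappa * (p x - q x)).
  by rewrite big_split /= -mulr_sumr sumrB hp.2 mass1 subrr mulr0 addr0.
apply: leif_sum => x _; apply: Wterm_tangent; rewrite ?simplex01 //.
by rewrite mulrC divfK // gt_eqF.
Qed.

Lemma continuous_gauss_mass : continuous (fun kappa => gauss_mass kappa).
Proof.
apply: (continuous_big add_continuous) => x _ k.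
have aff : {for k, continuous (fun k : R => (mu x - k) / sigma x)}.
  by apply: cvgM (cvg_cst _); apply: cvgB (cvg_cst _) cvg_id.
exact: (continuous_comp aff (@continuous_gPhi R _)).
Qed.

Lemma gauss_mass_ge (kappa z : R) : (forall x, kappa <= mu x - z * sigma x) ->
  #|T|%:R * gPhi z <= gauss_mass kappa.
Proof.
move=> hk; rewrite mulr_natl -sumr_const; apply: ler_sum => x _.
by rewrite ler_gPhi ler_pdivlMr //; have := hk x; lra.
Qed.

Lemma gauss_mass_le (kappa z : R) : (forall x, mu x - z * sigma x <= kappa) ->
  gauss_mass kappa <= #|T|%:R * gPhi z.
Proof.
move=> hk; rewrite mulr_natl -sumr_const; apply: ler_sum => x _.
by rewrite ler_gPhi ler_pdivrMr //; have := hk x; lra.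
Qed.

Lemma exists_gauss_mass_ge1 : (1 < #|T|)%N -> exists kappa : R, 1 <= gauss_mass kappa.
Proof.
rewrite -(ltr_nat R) => T_gt1.
have [z _ hz] : exists2 z, 0 <= z & 1 - (1 - (#|T|%:R : R)^-1) < gPhi z.
  by apply: (gPhi_right_tail 0); rewrite subr_gt0 invf_lt1 // (lt_trans ltr01).
have [k hk] := finite_ub (fun x => z * sigma x - mu x).
exists (- k); apply: le_trans (gauss_mass_ge (z := z) _); last by move=> x; have := hk x; lra.
by rewrite -ler_pdivrMl ?(lt_trans ltr01) // mulr1 ltW //; move: hz; rewrite subKr.
Qed.

Lemma exists_gauss_mass_le1 : (0 < #|T|)%N -> exists kappa : R, gauss_mass kappa <= 1.
Proof.
rewrite -(ltr_nat R) => T_gt0.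
have invT_gt0 : 0 < (#|T|%:R : R)^-1 by rewrite invr_gt0.
have [z _ hz] := gPhi_left_tail 0 invT_gt0.
have [k hk] := finite_ub (fun x => mu x - z * sigma x).
exists k; apply: le_trans (gauss_mass_le hk) _.
by rewrite -ler_pdivlMl // mulr1 ltW.
Qed.

Lemma exists_gauss_mass1 : (1 < #|T|)%N -> exists kappa : R, gauss_mass kappa = 1.
Proof.
move=> T_gt1; have [lo mass_lo] := exists_gauss_mass_ge1 T_gt1.
have [hi mass_hi] := exists_gauss_mass_le1 (ltnW T_gt1).
have ivt a b : a <= b ->
    Num.min (gauss_mass a) (gauss_mass b) <= 1 <= Num.max (gauss_mass a) (gauss_mass b) ->
    exists kappa : R, gauss_mass kappa = 1.
  by move=> ab /(IVT ab (continuous_subspaceT continuous_gauss_mass))[k _ <-]; exists k.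
by case: (leP lo hi) => [|/ltW] /ivt; apply; rewrite ge_min le_max mass_lo mass_hi !orbT.
Qed.

End objective.

Theorem proposition4 (R : realType) (T : finType) (mu sigma : T -> R)
  (hT : (1 < #|T|)%N) (hsigma : forall x, 0 < sigma x) :
  (forall (p p' : T -> R) (t : R),
      in_simplex p -> in_simplex p' -> p <> p' -> 0 < t -> t < 1 ->
      t * Wfun mu sigma p + (1 - t) * Wfun mu sigma p'
        < Wfun mu sigma (fun x => t * p x + (1 - t) * p' x)) /\
  (exists kappa : R, \sum_(x : T) gPhi ((mu x - kappa) / sigma x) = 1) /\
  (forall kappa : R, \sum_(x : T) gPhi ((mu x - kappa) / sigma x) = 1 ->
     let q := fun x => gPhi ((mu x - kappa) / sigma x) in
     in_simplex q /\
     (forall p : T -> R, in_simplex p -> p <> q ->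
        Wfun mu sigma p < Wfun mu sigma q)).
Proof.
split.
  move=> p p' t hp hp' pp' t_gt0 t_lt1.
  have t01 : 0 < t < 1 by rewrite t_gt0.
  by rewrite (lt_leif (Wfun_concave mu hsigma hp hp' t01)) fun_neq_forallN.
split; first by apply: exists_gauss_mass1 hT.
move=> kappa mass1 q; split; first by split => // x; exact: gPhi_ge0.
move=> p hp pq; rewrite (lt_leif (Wfun_tangent hsigma mass1 hp)).
exact: fun_neq_forallN.
Qed.
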